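(* Let $\mathcal{T}$ be a finite tree, $w:V(\mathcal{T})\to\mathbb{R}_{\ge0}$, $m=w(\mathcal{T})$, $\alpha\in[\tfrac13,\tfrac12]$, and let $c$ be an $\alpha$-centroid of $(\mathcal{T},w)$. Then $$\mathtt{OPT}(\mathcal{T},w)\ge(2-3\alpha)m+(3\alpha-1)w(c)+\sum_{\mathcal{H}\in\mathbb{C}(\mathcal{T}-c)}\mathtt{OPT}(\mathcal{H},w).$$
   Context: $\mathbb{C}(G)$ denotes the set of connected components of a graph $G$. For a subgraph $\mathcal{H}$, $w(\mathcal{H})=\sum_{x\in V(\mathcal{H})}w(x)$, and $w$ also denotes its restriction to $V(\mathcal{H})$. A search tree on a tree $\mathcal{T}$ is a rooted tree $T$ with vertex set $V(\mathcal{T})$ defined recursively: its root is an arbitrary vertex $r$, and the children of $r$ are the roots of search trees built on the connected components of $\mathcal{T}-r$; a single-vertex tree has only itself as search tree. $\mathtt{cost}_w(T)=\sum_x w(x)\,\mathtt{depth}_T(x)$ with root depth $1$; $\mathtt{OPT}(\mathcal{T},w)$ is the minimum cost over all search trees on $\mathcal{T}$. A vertex $v$ is an $\alpha$-centroid of $(\mathcal{T},w)$ if every component $\mathcal{H}$ of $\mathcal{T}-v$ has $w(\mathcal{H})\le\alpha\,w(\mathcal{T})$. *)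

From mathcomp Require Import all_boot all_order all_algebra.
From mathcomp Require Import classical_sets reals.
Set Implicit Arguments. Unset Strict Implicit. Unset Printing Implicit Defensive.
Import Order.TTheory GRing.Theory Num.Theory.
Local Open Scope ring_scope.

Section Defs.
Variables (T : finType) (e : rel T).

Definition induced (S : {set T}) : rel T :=
  fun x y => [&& e x y, x \in S & y \in S].

Definition comps (S : {set T}) : {set {set T}} :=
  [set [set y in S | connect (induced S) x y] | x in S].

(* (T, e) is a finite tree: connected, with |V| - 1 (undirected) edges;
   e is assumed symmetric and irreflexive separately. *)
Definition is_tree : Prop :=
  (forall x y : T, connect e x y) /\
  #|[set p : T * T | e p.1 p.2]| = (#|T| - 1).*2.

(* [IsST S d]: d is the depth function (root at depth 1, 0 outside S) of a
   search tree on the subtree induced by S, following the recursive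
   definition: a root r in S whose children are roots of search trees on
   the connected components of S - r. *)
Inductive IsST : {set T} -> (T -> nat) -> Prop :=
  | ST_node (S : {set T}) (d : T -> nat) (r : T) :
      r \in S ->
      (forall x, x \notin S -> d x = 0%N) ->
      d r = 1%N ->
      (forall H, H \in comps (S :\ r) ->
         exists dH, IsST H dH /\ (forall x, x \in H -> d x = (dH x).+1)) ->
      IsST S d.

Variables (R : realType) (w : T -> R).

Definition wS (S : {set T}) : R := \sum_(x in S) w x.

Definition cost (S : {set T}) (d : T -> nat) : R := \sum_(x in S) w x * (d x)%:R.

(* OPT(S, w): minimum cost of a search tree on S (the set of costs is finite
   and nonempty for nonempty connected S, so [inf] is attained). *)
Definition OPT (S : {set T}) : R :=
  inf (fun v : R => exists2 d, IsST S d & cost S d = v).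

Definition is_centroid (alpha : R) (c : T) : Prop :=
  forall H, H \in comps ([set: T] :\ c)%SET -> wS H <= alpha * wS [set: T]%SET.

End Defs.

From mathcomp Require Import all_boot all_order all_algebra.
From mathcomp Require Import reals.
From mathcomp Require Import boolp zify lra.
Import Order.TTheory GRing.Theory Num.Theory.
Set Implicit Arguments. Unset Strict Implicit. Unset Printing Implicit Defensive.

(* Split the cost of a search tree at the centroid [c] into the term of [c] and, for
   each component [H] of T - c, the cost of the vertices of [H]. Restricting a search
   tree to a connected set [H] that lies entirely below depth [k] gives a search tree
   on [H] whose depths are smaller by [k], so [H] contributes at least
   OPT(H) + k w(H). If [c] is the root, k = 1 for every component. Otherwise let [r]
   be the root and [r2] the root of the subtree containing [c]: the component of
   T - c containing [r] gets k = 0, the one containing [r2] gets k = 1, all others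
   get k = 2, and [c] has depth 2 (if c = r2) or at least 3. Both exceptional
   components weigh at most alpha m, and 1/3 <= alpha <= 1/2 closes the inequality. *)

Lemma connect_ind (T : finType) (r : rel T) (P : T -> Prop) x :
  P x -> (forall a b, P a -> r a b -> P b) -> forall y, connect r x y -> P y.
Proof.
move=> Px Pr y /connectP[p + ->]; elim: p x Px => //= a p IHp x Px /andP[rxa].
exact/IHp/(Pr x).
Qed.

Lemma choice_in (A B : Type) (b0 : B) (D : pred A) (Q : A -> B -> Prop) :
  (forall a, D a -> exists b, Q a b) -> exists f, forall a, D a -> Q a (f a).
Proof.
move=> hQ; have [f hf] : {f : A -> B & forall a, D a -> Q a (f a)}.
  apply: (@choice _ _ (fun a b => D a -> Q a b)) => a.
  by case: (boolP (D a)) => [/hQ[b Qb]|_]; [exists b | exists b0].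
by exists f.
Qed.

Section SearchTrees.
Variables (T : finType) (e : rel T).
Hypothesis sym_e : symmetric e.
Implicit Types (S A B H K : {set T}) (x y : T).

Definition component (S : {set T}) x := [set y in S | connect (induced e S) x y].

Definition connected_in (H : {set T}) :=
  forall x y, x \in H -> y \in H -> connect (induced e H) x y.

Lemma induced_sym S : symmetric (induced e S).
Proof. by move=> x y; rewrite /induced sym_e [(x \in S) && _]andbC. Qed.

Lemma connect_induced_sym S : connect_sym (induced e S).
Proof. exact/sym_connect_sym/induced_sym. Qed.

Lemma comps_partition S : partition (comps e S) S.
Proof.
apply: equivalence_partitionP => x y z _ _ _; split; first exact: connect0.
by move=> Cxy; apply/idP/idP; apply: connect_trans; rewrite // connect_induced_sym.
Qed.

Lemma mem_component S x : x \in S -> x \in component S x.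
Proof. by move=> xS; rewrite inE xS connect0. Qed.

Lemma component_comps S x : x \in S -> component S x \in comps e S.
Proof. exact: imset_f. Qed.

Lemma comps_sub S K : K \in comps e S -> K \subset S.
Proof. by case/imsetP=> x _ ->; apply/subsetP=> y /[!inE] /andP[]. Qed.

Lemma comps_component S K x : K \in comps e S -> x \in K -> K = component S x.
Proof.
case/imsetP=> y yS -> /[!inE] /andP[xS cyx]; apply/setP=> z; rewrite !inE.
apply: andb_id2l => zS; apply/idP/idP; last exact: connect_trans.
by apply: connect_trans; rewrite connect_induced_sym.
Qed.

Lemma comps_neq0 S K : K \in comps e S -> exists x, x \in K.
Proof. by case/imsetP=> x xS ->; exists x; apply: mem_component. Qed.

Lemma induced_subrel A B : A \subset B -> subrel (induced e A) (induced e B).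
Proof. by move=> /subsetP AB x y /and3P[exy /AB xB /AB yB]; rewrite /induced exy xB yB. Qed.

Lemma connect_induced_sub A B : A \subset B ->
  subrel (connect (induced e A)) (connect (induced e B)).
Proof. by move=> AB; apply: connect_sub => x y /(induced_subrel AB) /connect1. Qed.

Lemma connect_induced_mem S x y : x \in S -> connect (induced e S) x y -> y \in S.
Proof. by move=> xS; apply: (connect_ind (P := fun z => z \in S)) => // a b _ /and3P[]. Qed.

Lemma connected_in_component S x : x \in S -> connected_in (component S x).
Proof.
move=> xS; have xK y : connect (induced e S) x y -> connect (induced e (component S x)) x y.
  case/connectP=> p pth ->; apply/connectP; exists p => //.
  have allK : all (mem (component S x)) (x :: p).
    apply/allP=> z /(path_connect pth) cxz.
    by rewrite !inE cxz (connect_induced_mem xS cxz).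
  by apply: sub_in_path allK pth => a b aK bK /and3P[eab _ _]; rewrite /induced eab aK bK.
move=> y z /[!inE] /andP[_ /xK cy] /andP[_ /xK cz].
by apply: connect_trans cz; rewrite connect_induced_sym.
Qed.

Lemma comps_connected S K : K \in comps e S -> connected_in K.
Proof. by case/imsetP=> x xS ->; apply: connected_in_component. Qed.

Lemma connected_in_sub_component S H x :
  H \subset S -> connected_in H -> x \in H -> H \subset component S x.
Proof.
move=> HS cH xH; apply/subsetP=> y yH; rewrite inE (subsetP HS) //=.
exact: (connect_induced_sub HS (cH x y xH yH)).
Qed.

Lemma big_comps_setD1 (V : nmodType) S c (F : T -> V) : c \in S ->
  (\sum_(x in S) F x = F c + \sum_(H in comps e (S :\ c)) \sum_(x in H) F x)%R.
Proof.
by move=> cS; rewrite (big_setD1 c cS) (set_partition_big _ (comps_partition _)).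
Qed.

Lemma sum_comps_mem (V : nmodType) S y (f : {set T} -> V) :
  (\sum_(H in comps e S) (if y \in H then f H else 0) =
    if y \in S then f (component S y) else 0)%R.
Proof.
case: ifPn => yS; last first.
  by rewrite big1 // => H /comps_sub/subsetP HS; case: ifPn => // /HS; rewrite (negPf yS).
rewrite (bigD1 _ (component_comps yS)) /= mem_component // big1 ?addr0 // => H /andP[Hc].
by case: ifPn => // yH; rewrite -(comps_component Hc yH) eqxx.
Qed.

Section ConnectedGraph.
Hypothesis connected_e : forall x y, connect e x y.

Lemma comps_setD1_neighbour c H :
  H \in comps e ([set: T] :\ c) -> exists2 u, u \in H & e c u.
Proof.
move=> Hc; have [y yH] := comps_neq0 Hc.
pose P z := z = c \/ exists2 u, e c u && (u != c) & connect (induced e ([set: T] :\ c)) u z.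
have Py : P y.
  apply: (connect_ind (P := P) (or_introl erefl)) (connected_e c y) => a b Pa eab.
  have [->|bc] := eqVneq b c; [by left | right].
  have [ca|ac] := eqVneq a c; first by subst a; exists b; rewrite ?connect0 // eab bc.
  case: Pa => [/eqP|[u hu cua]]; first by rewrite (negbTE ac).
  exists u => //; apply: connect_trans cua (connect1 _).
  by rewrite /induced eab !inE bc ac.
case: Py => [yc|[u /andP[ecu uc] cuy]].
  by move: (subsetP (comps_sub Hc) _ yH); rewrite yc !inE eqxx.
exists u => //; rewrite (comps_component Hc yH) !inE uc /=.
by rewrite connect_induced_sym.
Qed.

Lemma comps_setD1_sub_component c r H : r != c ->
  H \in comps e ([set: T] :\ c) -> r \notin H -> H \subset component ([set: T] :\ r) c.
Proof.
move=> rc Hc rH; have [u uH ecu] := comps_setD1_neighbour Hc.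
have HV : H \subset ([set: T] :\ r).
  by apply/subsetP=> z zH; rewrite !inE andbT; apply: contraNneq rH => <-.
apply/subsetP=> y yH; rewrite inE (subsetP HV _ yH) /=.
have cu : induced e ([set: T] :\ r) c u by rewrite /induced ecu (subsetP HV _ uH) !inE eq_sym rc.
exact: connect_trans (connect1 cu) (connect_induced_sub HV (comps_connected Hc uH yH)).
Qed.

End ConnectedGraph.

Lemma card_comps_setD1 S r K : r \in S -> K \in comps e (S :\ r) -> #|K| < #|S|.
Proof. by move=> rS /comps_sub/subset_leq_card; rewrite (cardsD1 r S) rS. Qed.

Lemma IsST_root S d : IsST e S d -> exists r, [/\ r \in S, d r = 1 &
  forall x, x \in S :\ r -> exists2 dK, IsST e (component (S :\ r) x) dK &
    forall y, y \in component (S :\ r) x -> d y = (dK y).+1].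
Proof.
case=> {}S {}d r rS _ dr sub; exists r; split=> // x xS.
by have [dK [stK eqK]] := sub _ (component_comps xS); exists dK.
Qed.

Lemma IsST_depth_gt0 S d x : IsST e S d -> x \in S -> 0 < d x.
Proof.
case/IsST_root=> r [rS dr sub] xS; have [->|xr] := eqVneq x r; first by rewrite dr.
have xS' : x \in S :\ r by rewrite !inE xr.
by have [dK _ ->] := sub x xS'; last exact: mem_component.
Qed.

Lemma IsST_depth_gt1 S d r x :
  IsST e S d -> r \in S -> d r = 1 -> x \in S -> x != r -> 1 < d x.
Proof.
move=> st rS dr xS xr; have [r' [r'S dr' sub]] := IsST_root st.
have [rr'|rr'] := eqVneq r' r.
  have xS' : x \in S :\ r' by rewrite !inE rr' xr.
  have [dK stK ->] := sub x xS'; last exact: mem_component.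
  by rewrite ltnS (IsST_depth_gt0 stK) // mem_component.
have rS' : r \in S :\ r' by rewrite !inE eq_sym rr'.
have [dK stK eqK] := sub r rS'.
have := IsST_depth_gt0 stK (mem_component rS').
by rewrite -ltnS -eqK ?mem_component // dr.
Qed.

Definition graft S r (F : {set T} -> T -> nat) x : nat :=
  if x \in S then if x == r then 1 else (F (component (S :\ r) x) x).+1 else 0.

Lemma IsST_graft S r F : r \in S ->
  (forall K, K \in comps e (S :\ r) -> IsST e K (F K)) -> IsST e S (graft S r F).
Proof.
move=> rS stF; apply: (ST_node rS) => [x /negbTE xS||K Kc]; rewrite /graft ?rS ?eqxx ?xS //.
exists (F K); split=> [|x xK]; first exact: stF.
have /[!inE] /andP[xr xS] := subsetP (comps_sub Kc) _ xK.
by rewrite xS (negbTE xr) -(comps_component Kc xK).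
Qed.

Lemma IsST_exists S : (exists x, x \in S) -> exists d, IsST e S d.
Proof.
move: {2}#|S| (leqnn #|S|) => n; elim: n S => [|n IH] S szS [r rS].
  by move: szS; rewrite leqn0 => /eqP/cards0_eq S0; rewrite S0 inE in rS.
have [F stF] : exists F, forall K, K \in comps e (S :\ r) -> IsST e K (F K).
  apply: (choice_in (fun=> 0)) => K Kc; apply: IH (comps_neq0 Kc).
  by rewrite -ltnS (leq_trans (card_comps_setD1 rS Kc)).
by exists (graft S r F); apply: IsST_graft.
Qed.

Lemma IsST_restrict S d H k : IsST e S d -> H \subset S -> connected_in H ->
  (exists x, x \in H) -> (forall y, y \in H -> k < d y) ->
  exists2 dH, IsST e H dH & forall x, x \in H -> dH x + k <= d x.
Proof.
move: {2}#|S| (leqnn #|S|) => n; elim: n S d H k => [|n IH] S d H k szS st HS cH [x0 x0H] hk.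
  move: szS; rewrite leqn0 => /eqP/cards0_eq S0.
  by move: (subsetP HS _ x0H); rewrite S0 inE.
have [r [rS dr sub]] := IsST_root st.
have IHsub H' k' : H' \subset S :\ r -> connected_in H' -> (exists y, y \in H') ->
    (forall y, y \in H' -> k' < d y) ->
    exists2 dH, IsST e H' dH & forall y, y \in H' -> dH y + k' <= d y.
  move=> H'S cH' [x xH'] hk'; have xS := subsetP H'S _ xH'.
  have H'K := connected_in_sub_component H'S cH' xH'.
  have [dK stK eqK] := sub x xS.
  have ltK : #|component (S :\ r) x| <= n.
    by rewrite -ltnS (leq_trans (card_comps_setD1 rS (component_comps xS))).
  have dK_gt0 y : y \in H' -> 0 < dK y by move/(subsetP H'K); apply: IsST_depth_gt0.
  have [|dH stH hdH] := IH _ _ H' k'.-1 ltK stK H'K cH' (ex_intro _ x xH').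
    by move=> y yH'; have := hk' y yH'; have := dK_gt0 y yH'; rewrite eqK ?(subsetP H'K) //; lia.
  exists dH => // y yH'; have := hdH y yH'; have := dK_gt0 y yH'.
  by rewrite eqK ?(subsetP H'K) //; lia.
case: (boolP (r \in H)) => rH.
  have k0 : k = 0 by move: (hk r rH); rewrite dr ltnS leqn0 => /eqP.
  have /(choice_in (fun=> 0))[F stF] : forall K, K \in comps e (H :\ r) ->
      exists f, IsST e K f /\ forall x, x \in K -> f x < d x.
    move=> K Kc; have KS : K \subset S :\ r := subset_trans (comps_sub Kc) (setSD _ HS).
    have [|dH stH hdH] := IHsub K 1 KS (comps_connected Kc) (comps_neq0 Kc).
      by move=> y /(subsetP KS) /[!inE] /andP[yr yS]; apply: IsST_depth_gt1 st rS dr yS yr.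
    by exists dH; split=> // y /hdH; rewrite addn1.
  exists (graft H r F) => [|x xH]; first by apply: IsST_graft => // K /stF[].
  rewrite k0 addn0 /graft xH; case: eqVneq => [->|xr]; first by rewrite dr.
  have xH' : x \in H :\ r by rewrite !inE xr.
  by case: (stF _ (component_comps xH')) => _; apply; apply: mem_component.
apply: IHsub => //; last by exists x0.
by apply/subsetP=> y yH; rewrite !inE (subsetP HS) // andbT; apply: contraNneq rH => <-.
Qed.

End SearchTrees.

Local Open Scope ring_scope.

Section Weights.
Variables (R : realType) (T : finType) (e : rel T) (w : T -> R).
Hypotheses (sym_e : symmetric e) (w_ge0 : forall x, 0 <= w x).
Implicit Types (S H : {set T}) (d : T -> nat).

Lemma wS_ge0 S : 0 <= wS w S.
Proof. exact: sumr_ge0. Qed.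

Lemma cost_ge0 S d : 0 <= cost w S d.
Proof. by apply: sumr_ge0 => x _; apply: mulr_ge0. Qed.

Lemma OPT_le_cost S d : IsST e S d -> OPT e w S <= cost w S d.
Proof.
move=> st; apply: ge_inf; last by exists d.
by exists 0 => v [d' _ <-]; apply: cost_ge0.
Qed.

Lemma OPT_add_le_cost S d H k : IsST e S d -> H \subset S -> connected_in e H ->
  (exists x, x \in H) -> (forall y, y \in H -> (k < d y)%N) ->
  OPT e w H + k%:R * wS w H <= cost w H d.
Proof.
move=> st HS cH neH hk; have [dH stH hdH] := IsST_restrict sym_e st HS cH neH hk.
apply: le_trans (lerD (OPT_le_cost stH) (lexx _)) _.
rewrite /cost /wS mulr_sumr -big_split /=; apply: ler_sum => x xH.
by rewrite [k%:R * _]mulrC -mulrDr ler_wpM2l // -natrD ler_nat hdH.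
Qed.

Lemma cost_ge_comps S d c (k : {set T} -> nat) : IsST e S d -> c \in S ->
  (forall H, H \in comps e (S :\ c) -> forall y, y \in H -> (k H < d y)%N) ->
  w c * (d c)%:R + \sum_(H in comps e (S :\ c)) (OPT e w H + (k H)%:R * wS w H)
    <= cost w S d.
Proof.
move=> st cS hk; rewrite /cost (big_comps_setD1 sym_e _ cS) lerD2l.
apply: ler_sum => H Hc; have HS := subset_trans (comps_sub Hc) (subD1set S c).
exact: OPT_add_le_cost st HS (comps_connected sym_e Hc) (comps_neq0 Hc) (hk H Hc).
Qed.

End Weights.

Section CentroidBound.
Variables (R : realType) (T : finType) (e : rel T) (w : T -> R) (alpha : R) (c : T).
Hypotheses (sym_e : symmetric e) (connected_e : forall x y, connect e x y).
Hypotheses (w_ge0 : forall x, 0 <= w x) (centroid : is_centroid e w alpha c).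
Hypotheses (alpha_ge : 1 <= 3 * alpha) (alpha_le : 2 * alpha <= 1).

Local Notation V := [set: T].
Local Notation W := (\sum_(H in comps e (V :\ c)) wS w H).
Local Notation lower_bound := ((2 - 3 * alpha) * wS w V + (3 * alpha - 1) * w c
  + \sum_(H in comps e (V :\ c)) OPT e w H).

Let cV : c \in V := in_setT c.

Let wS_V : wS w V = w c + W.
Proof. exact: big_comps_setD1. Qed.

Let W_ge0 : 0 <= W.
Proof. by apply: sumr_ge0 => H _; apply: wS_ge0. Qed.

Lemma lower_bound_le_cost_root_c d : IsST e V d -> d c = 1%N -> lower_bound <= cost w V d.
Proof.
move=> st dc; have gt1 H : H \in comps e (V :\ c) -> forall y, y \in H -> (1 < d y)%N.
  move=> /comps_sub/subsetP HV y /HV /[!inE] /andP[yc _].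
  exact: IsST_depth_gt1 st cV dc (in_setT y) yc.
apply: le_trans (cost_ge_comps sym_e w_ge0 st cV gt1); rewrite dc big_split /= wS_V.
rewrite (eq_bigr (wS w) (fun H _ => mul1r _)).
have : 0 <= (3 * alpha - 1) * W by rewrite mulr_ge0 ?subr_ge0.
nra.
Qed.

Lemma cost_ge_root_neq_c d r dC r2 : IsST e V d -> r != c ->
  IsST e (component e (V :\ r) c) dC ->
  (forall y, y \in component e (V :\ r) c -> d y = (dC y).+1) ->
  r2 \in component e (V :\ r) c -> dC r2 = 1%N ->
  w c * (d c)%:R + \sum_(H in comps e (V :\ c)) OPT e w H
    + (2 * W - 2 * wS w (component e (V :\ c) r)
       - (if r2 == c then 0 else wS w (component e (V :\ c) r2)))
  <= cost w V d.
Proof.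
move=> st rc stC eqC r2C dCr2.
pose k (H : {set T}) := if r \in H then 0%N else if r2 \in H then 1%N else 2%N.
have hk H : H \in comps e (V :\ c) -> forall y, y \in H -> (k H < d y)%N.
  move=> Hc y yH; rewrite /k; case: ifPn => rH; first exact: IsST_depth_gt0 st (in_setT y).
  have yC := subsetP (comps_setD1_sub_component sym_e connected_e rc Hc rH) _ yH.
  rewrite eqC // ltnS; case: ifPn => r2H; first exact: IsST_depth_gt0 stC yC.
  by apply: (IsST_depth_gt1 stC r2C dCr2 yC); apply: contraNneq r2H => <-.
apply: le_trans (cost_ge_comps sym_e w_ge0 st cV hk); rewrite big_split /= -addrA !lerD2l.
have -> : wS w (component e (V :\ c) r) =
    \sum_(H in comps e (V :\ c)) (if r \in H then wS w H else 0).
  by rewrite sum_comps_mem // !inE rc.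
have -> : (if r2 == c then 0 else wS w (component e (V :\ c) r2)) =
    \sum_(H in comps e (V :\ c)) (if r2 \in H then wS w H else 0).
  by rewrite sum_comps_mem // !inE andbT; case: eqVneq.
rewrite !mulr_sumr -!sumrB; apply: ler_sum => H _.
by have := wS_ge0 w_ge0 H; rewrite /k; do 2 case: ifP => _; lra.
Qed.

Lemma lower_bound_le_cost_root_neq_c d r dC : IsST e V d -> r != c ->
  IsST e (component e (V :\ r) c) dC ->
  (forall y, y \in component e (V :\ r) c -> d y = (dC y).+1) ->
  lower_bound <= cost w V d.
Proof.
move=> st rc stC eqC; have cC : c \in component e (V :\ r) c.
  by rewrite mem_component // !inE eq_sym rc.
have [r2 [r2C dCr2 _]] := IsST_root stC.
apply: le_trans (cost_ge_root_neq_c st rc stC eqC r2C dCr2).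
have wCr : wS w (component e (V :\ c) r) <= alpha * wS w V.
  by rewrite centroid // component_comps // !inE rc.
have alpha_ge0 : 0 <= alpha by move: alpha_ge; lra.
have h1 : 0 <= (1 - 2 * alpha) * w c by rewrite mulr_ge0 ?subr_ge0.
have h2 : 0 <= alpha * W := mulr_ge0 alpha_ge0 W_ge0.
move: wCr; rewrite wS_V; have [r2c|r2c] := eqVneq r2 c.
  have dc : d c = 2%N by rewrite eqC // -r2c dCr2.
  by rewrite dc; nra.
have wCr2 : wS w (component e (V :\ c) r2) <= alpha * (w c + W).
  by rewrite -wS_V centroid // component_comps // !inE r2c.
have dc : 3%:R * w c <= w c * (d c)%:R.
  rewrite mulrC ler_wpM2l // eqC // ler_nat ltnS.
  by apply: (IsST_depth_gt1 stC r2C dCr2 cC); rewrite eq_sym.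
have h3 : 0 <= (2 - 3 * alpha) * w c by rewrite mulr_ge0 // subr_ge0; move: alpha_le; lra.
nra.
Qed.

End CentroidBound.

Unset Implicit Arguments. Set Strict Implicit.

Theorem mainTheorem12 (R : realType) (T : finType) (e : rel T)
    (w : T -> R) (alpha : R) (c : T) :
  symmetric e -> irreflexive e -> is_tree e ->
  (forall x, 0 <= w x) ->
  3^-1 <= alpha <= 2^-1 ->
  is_centroid e w alpha c ->
  OPT e w [set: T]%SET >=
    (2 - 3 * alpha) * wS w [set: T]%SET + (3 * alpha - 1) * w c
    + \sum_(H in comps e ([set: T] :\ c)%SET) OPT e w H.
Proof.
move=> sym_e _ [connected_e _] w_ge0 /andP[alpha_3 alpha_2] centroid.
have alpha_ge : 1 <= 3 * alpha by lra.
have alpha_le : 2 * alpha <= 1 by lra.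
have [d0 st0] := IsST_exists sym_e (ex_intro _ c (in_setT c)).
apply: lb_le_inf => [|_ [d st <-]]; first by exists (cost w [set: T] d0), d0.
have [r [_ dr sub]] := IsST_root st.
have [rc|rc] := eqVneq r c.
  by apply: (lower_bound_le_cost_root_c sym_e w_ge0 alpha_ge st); rewrite -rc.
have [|dC stC eqC] := sub c; first by rewrite !inE eq_sym rc.
exact: (lower_bound_le_cost_root_neq_c sym_e connected_e w_ge0 centroid alpha_ge alpha_le
  st rc stC eqC).
Qed.
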